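(* Let $0<\kappa<\frac13$ and define $g:\mathbb{R}\to\mathbb{R}$ by $g(t)=\sqrt{1-\kappa t^2}$ if $0\leq t<1$, $g(t)=\frac{\kappa}{t\sqrt{1-\kappa}}+\frac{1-2\kappa}{\sqrt{1-\kappa}}$ if $t\geq1$, and $g(t)=g(-t)$ for $t<0$. Let $G(t)=\int_0^tg(s)\,ds$ and $G^{-1}$ its inverse. Then: (1) $\lim_{t\to0}\frac{G^{-1}(t)}{t}=1$; (2) $\lim_{t\to\infty}\frac{G^{-1}(t)}{t}=\frac{\sqrt{1-\kappa}}{1-2\kappa}$; (3) $t\leq G^{-1}(t)\leq 3t$ for all $t\geq0$; (4) $-\frac32\leq\frac{t}{g(t)}g'(t)\leq0$ for all $t\geq0$.
   Context: The function $g$ is $C^1$, even, with values in $(\frac{1-2\kappa}{\sqrt{1-\kappa}},1]$, and $G$ is a strictly increasing odd bijection of $\mathbb{R}$. *)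

From Stdlib Require Import Reals.
From Coquelicot Require Export Coquelicot.
Open Scope R_scope.

Definition g_pos (kappa t : R) : R :=
  if Rlt_dec t 1 then sqrt (1 - kappa * t ^ 2)
  else kappa / (t * sqrt (1 - kappa)) + (1 - 2 * kappa) / sqrt (1 - kappa).

Definition g (kappa t : R) : R := g_pos kappa (Rabs t).

Definition G (kappa t : R) : R := RInt (g kappa) 0 t.

From Stdlib Require Import Reals Lra Psatz.
From Coquelicot Require Import Coquelicot.
Open Scope R_scope.

(* [G x / x] is the mean of [g] over [0, x], so it lies between [g x] and [1]; since
   [g] decreases in [|x|] towards [g_inf > 1/3], inverting gives [1 <= Ginv t / t < 3].
   The limits of [Ginv t / t] are the reciprocals of those of [G x / x], transported
   along [x = Ginv t]: at [0] the mean tends to [g 0 = 1], and on [[1, oo)] the explicit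
   primitive [G x = G 1 + g_coef ln x + g_inf (x - 1)] gives [g_inf] at infinity.
   The elasticity [t g' t / g t] is [-k t^2 / (1 - k t^2)] below [1] and
   [-g_coef / (g_coef + g_inf t)] above, both in [[-1, 0]]. *)

Lemma RInt_div_bounds (f : R -> R) (a b m M : R) :
  a <> b -> ex_RInt f a b ->
  (forall s, Rmin a b < s < Rmax a b -> m <= f s <= M) ->
  m <= RInt f a b / (b - a) <= M.
Proof.
  assert (ordered : forall u v, u < v -> ex_RInt f u v ->
            (forall s, u < s < v -> m <= f s <= M) ->
            m <= RInt f u v / (v - u) <= M).
  { intros u v Huv Hint Hs.
    assert (lower : RInt (fun _ => m) u v <= RInt f u v).
    { apply RInt_le; [lra | apply ex_RInt_const | exact Hint | intros; apply Hs; auto]. }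
    assert (upper : RInt f u v <= RInt (fun _ => M) u v).
    { apply RInt_le; [lra | exact Hint | apply ex_RInt_const | intros; apply Hs; auto]. }
    rewrite !RInt_const in lower, upper. unfold scal in *; simpl in *; unfold mult in *; simpl in *.
    replace (RInt f u v) with (RInt f u v / (v - u) * (v - u)) in lower, upper by (field; lra).
    split; nra. }
  intros Hab Hint Hs. destruct (Rlt_or_le a b) as [Hlt | Hle].
  - rewrite Rmin_left, Rmax_right in Hs by lra. auto.
  - rewrite Rmin_right, Rmax_left in Hs by lra.
    replace (RInt f a b / (b - a)) with (RInt f b a / (a - b)).
    + apply ordered; [lra | apply ex_RInt_swap; exact Hint | exact Hs].
    + rewrite <- (opp_RInt_swap f a b Hint). unfold opp; simpl. field; lra.
Qed.

Lemma derivable_pt_lim_glue (f f1 f2 : R -> R) (x l : R) :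
  derivable_pt_lim f1 x l -> derivable_pt_lim f2 x l ->
  (forall y, y <= x -> f y = f1 y) -> (forall y, x <= y -> f y = f2 y) ->
  derivable_pt_lim f x l.
Proof.
  intros H1 H2 E1 E2 eps Heps.
  destruct (H1 eps Heps) as [d1 Hd1]. destruct (H2 eps Heps) as [d2 Hd2].
  assert (Hd : 0 < Rmin d1 d2) by (apply Rmin_pos; apply cond_pos).
  exists (mkposreal _ Hd). intros h Hh Hsmall. simpl in Hsmall.
  destruct (Rlt_or_le h 0).
  - rewrite !E1 by lra. apply Hd1; auto. eapply Rlt_le_trans; [exact Hsmall | apply Rmin_l].
  - rewrite !E2 by lra. apply Hd2; auto. eapply Rlt_le_trans; [exact Hsmall | apply Rmin_r].
Qed.

Lemma is_lim_inverse_ratio (F Finv : R -> R) (a : Rbar) (L : R) :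
  (forall t, F (Finv t) = t) -> L <> 0 ->
  is_lim (fun x => F x / x) a L -> is_lim Finv a a ->
  Rbar_locally' a (fun t => Finite (Finv t) <> a) ->
  is_lim (fun t => Finv t / t) a (/ L).
Proof.
  intros HF HL Hratio Hinv Havoid.
  (* [Rinv_div] needs no side condition because [/ 0 = 0]. *)
  apply is_lim_ext with (fun t => / (F (Finv t) / Finv t)).
  { intro t. rewrite Rinv_div, HF. reflexivity. }
  apply (is_lim_comp (fun x => / (F x / x)) Finv a (/ L) a); [| exact Hinv | exact Havoid].
  apply (is_lim_inv _ _ L); [exact Hratio | congruence].
Qed.

Lemma opp_div_between (a c : R) : 0 <= a <= c -> 0 < c -> -1 <= - a / c <= 0.
Proof.
  intros Ha Hc. replace a with (a / c * c) in Ha by (field; lra).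
  replace (- a / c) with (- (a / c)) by (field; lra). split; nra.
Qed.

Section Profile.

Variable k : R.
Hypothesis k_pos : 0 < k.
Hypothesis k_lt : k < 1 / 3.

Definition g_coef : R := k / sqrt (1 - k).
Definition g_inf : R := (1 - 2 * k) / sqrt (1 - k).

Lemma sqrt_1mk_pos : 0 < sqrt (1 - k).
Proof. apply sqrt_lt_R0; lra. Qed.

Lemma g_coef_pos : 0 < g_coef.
Proof. apply Rdiv_lt_0_compat; [lra | apply sqrt_1mk_pos]. Qed.

Lemma g_coef_add_inf : g_coef + g_inf = sqrt (1 - k).
Proof.
  pose proof sqrt_1mk_pos as Hs. pose proof (sqrt_sqrt (1 - k) ltac:(lra)) as Hsq.
  apply Rmult_eq_reg_r with (sqrt (1 - k)); [| lra].
  rewrite Hsq. unfold g_coef, g_inf. field. lra.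
Qed.

(* [sqrt (1 - k) < 3 (1 - 2 k)] squares to [0 < 8 - 35 k + 36 k^2], true for [k < 1/3]. *)
Lemma g_inf_gt_third : 1 / 3 < g_inf.
Proof.
  pose proof sqrt_1mk_pos as Hs. pose proof (sqrt_sqrt (1 - k) ltac:(lra)) as Hsq.
  unfold g_inf. apply Rmult_lt_reg_r with (sqrt (1 - k)); [exact Hs |].
  replace ((1 - 2 * k) / sqrt (1 - k) * sqrt (1 - k)) with (1 - 2 * k) by (field; lra).
  nra.
Qed.

Lemma g_pos_lt1 t : t < 1 -> g_pos k t = sqrt (1 - k * t ^ 2).
Proof. intros Ht. unfold g_pos. destruct (Rlt_dec t 1); [reflexivity | lra]. Qed.

Lemma g_pos_ge1 t : 1 <= t -> g_pos k t = g_coef / t + g_inf.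
Proof.
  intros Ht. pose proof sqrt_1mk_pos. unfold g_pos, g_coef, g_inf.
  destruct (Rlt_dec t 1); [lra | field; lra].
Qed.

Lemma g_pos_1 : g_pos k 1 = sqrt (1 - k).
Proof. rewrite g_pos_ge1 by lra. rewrite <- g_coef_add_inf. field. Qed.

Lemma g_pos_antitone x y : 0 <= x <= y -> g_pos k y <= g_pos k x.
Proof.
  intros [Hx Hxy]. pose proof g_coef_pos.
  assert (Hinv : forall u v, 1 <= u <= v -> g_coef / v <= g_coef / u).
  { intros u v Huv. apply Rmult_le_compat_l; [lra | apply Rinv_le_contravar; lra]. }
  destruct (Rlt_dec y 1); [| destruct (Rlt_dec x 1)].
  - rewrite !g_pos_lt1 by lra. apply sqrt_le_1_alt.
    assert (x ^ 2 <= y ^ 2) by nra. nra.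
  - rewrite (g_pos_lt1 x), (g_pos_ge1 y) by lra. apply Rle_trans with (g_pos k 1).
    + rewrite g_pos_ge1 by lra. specialize (Hinv 1 y). lra.
    + rewrite g_pos_1. apply sqrt_le_1_alt. assert (x ^ 2 <= 1) by nra. nra.
  - rewrite !g_pos_ge1 by lra. specialize (Hinv x y). lra.
Qed.

Lemma g_le_1 x : g k x <= 1.
Proof.
  unfold g. rewrite <- sqrt_1. replace 1 with (1 - k * 0 ^ 2) at 1 by ring.
  rewrite <- g_pos_lt1 by lra. apply g_pos_antitone. split; [lra | apply Rabs_pos].
Qed.

Lemma g_ge_inf x : g_inf <= g k x.
Proof.
  unfold g. pose proof g_coef_pos. pose proof (Rabs_pos x).
  destruct (Rlt_dec (Rabs x) 1).
  - apply Rle_trans with (g_pos k 1); [| apply g_pos_antitone; lra].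
    rewrite g_pos_1, <- g_coef_add_inf. lra.
  - rewrite g_pos_ge1 by lra. assert (0 <= g_coef / Rabs x) by (apply Rle_mult_inv_pos; lra). lra.
Qed.


Lemma is_derive_sqrt_branch t : 0 <= t <= 1 ->
  is_derive (fun u => sqrt (1 - k * u ^ 2)) t (- (k * t) / sqrt (1 - k * t ^ 2)).
Proof.
  intros Ht. assert (Hpos : 0 < 1 - k * t ^ 2) by nra.
  pose proof (sqrt_lt_R0 _ Hpos).
  auto_derive; [lra |]. replace (1 + - (k * (t * (t * 1)))) with (1 - k * t ^ 2) by ring.
  field. lra.
Qed.

Lemma is_derive_hyperbolic_branch t : 0 < t ->
  is_derive (fun u => g_coef / u + g_inf) t (- g_coef / t ^ 2).
Proof. intros Ht. auto_derive; [lra | field; lra]. Qed.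

Lemma is_derive_g_pos_lt1 t : 0 <= t < 1 ->
  is_derive (g_pos k) t (- (k * t) / sqrt (1 - k * t ^ 2)).
Proof.
  intros Ht. eapply is_derive_ext_loc; [| apply is_derive_sqrt_branch; lra].
  apply (filter_imp (fun u => u < 1)); [| apply open_lt; lra].
  intros u Hu. symmetry. apply g_pos_lt1; exact Hu.
Qed.

Lemma is_derive_g_pos_ge1 t : 1 <= t -> is_derive (g_pos k) t (- g_coef / t ^ 2).
Proof.
  intros Ht. destruct (Req_dec t 1) as [-> | Hne].
  - apply is_derive_Reals.
    apply (derivable_pt_lim_glue _ (fun u => sqrt (1 - k * u ^ 2)) (fun u => g_coef / u + g_inf)).
    + apply is_derive_Reals. replace (- g_coef / 1 ^ 2) with (- (k * 1) / sqrt (1 - k * 1 ^ 2)).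
      * apply is_derive_sqrt_branch; lra.
      * pose proof sqrt_1mk_pos. unfold g_coef. replace (1 - k * 1 ^ 2) with (1 - k) by ring.
        field. lra.
    + apply is_derive_Reals, is_derive_hyperbolic_branch; lra.
    + intros y Hy. destruct (Req_dec y 1) as [-> | Hy1].
      * rewrite g_pos_1. f_equal. ring.
      * apply g_pos_lt1; lra.
    + intros y Hy. apply g_pos_ge1; exact Hy.
  - eapply is_derive_ext_loc; [| apply is_derive_hyperbolic_branch; lra].
    apply (filter_imp (fun u => 1 < u)); [| apply open_gt; lra].
    intros u Hu. symmetry. apply g_pos_ge1; lra.
Qed.

Lemma continuous_g x : continuous (g k) x.
Proof.
  apply (continuous_comp Rabs (g_pos k)); [apply continuous_Rabs |].
  apply (ex_derive_continuous (K := R_AbsRing) (V := R_NormedModule)).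
  pose proof (Rabs_pos x). destruct (Rlt_dec (Rabs x) 1).
  - eexists. apply is_derive_g_pos_lt1; lra.
  - eexists. apply is_derive_g_pos_ge1; lra.
Qed.

Lemma Derive_g t l : 0 < t -> is_derive (g_pos k) t l -> Derive (g k) t = l.
Proof.
  intros Ht Hd. apply is_derive_unique. eapply is_derive_ext_loc; [| exact Hd].
  apply (filter_imp (fun u => 0 < u)); [| apply open_gt; exact Ht].
  intros u Hu. unfold g. rewrite Rabs_pos_eq; lra.
Qed.

Lemma ex_RInt_g a b : ex_RInt (g k) a b.
Proof. apply (ex_RInt_continuous (V := R_CompleteNormedModule)). intros; apply continuous_g. Qed.

Lemma G_0 : G k 0 = 0.
Proof. unfold G. rewrite RInt_point. reflexivity. Qed.

Lemma G_ratio_bounds x : x <> 0 -> g k x <= G k x / x <= 1.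
Proof.
  intros Hx. unfold G. replace (RInt (g k) 0 x / x) with (RInt (g k) 0 x / (x - 0)) by (f_equal; ring).
  apply RInt_div_bounds; [congruence | apply ex_RInt_g |].
  intros s Hs. split; [| apply g_le_1].
  unfold g. apply g_pos_antitone. split; [apply Rabs_pos |].
  unfold Rmin, Rmax in Hs. destruct (Rle_dec 0 x).
  - rewrite !Rabs_pos_eq; lra.
  - rewrite !Rabs_left; lra.
Qed.


Lemma is_lim_G_ratio_0 : is_lim (fun x => G k x / x) 0 1.
Proof.
  apply (is_lim_le_le_loc (g k) (fun _ => 1)).
  - exists (mkposreal 1 Rlt_0_1). intros x _ Hx. apply G_ratio_bounds; exact Hx.
  - replace (Finite 1) with (Finite (g k 0)).
    + exact (is_lim_comp_continuous (fun x => x) (g k) 0 0 (is_lim_id 0) (continuous_g 0)).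
    + unfold g. rewrite Rabs_R0, g_pos_lt1 by lra. f_equal.
      replace (1 - k * 0 ^ 2) with 1 by ring. apply sqrt_1.
  - apply is_lim_const.
Qed.

Lemma G_ge1 x : 1 <= x -> G k x = G k 1 + g_coef * ln x + g_inf * (x - 1).
Proof.
  intros Hx. unfold G. rewrite <- (RInt_Chasles (g k) 0 1 x) by apply ex_RInt_g.
  unfold plus; simpl. rewrite Rplus_assoc. f_equal.
  rewrite (RInt_ext (g k) (fun u => g_coef / u + g_inf)).
  2:{ intros u Hu. rewrite Rmin_left, Rmax_right in Hu by lra.
      unfold g. rewrite Rabs_pos_eq by lra. apply g_pos_ge1; lra. }
  assert (Hftc : is_RInt (fun u => g_coef / u + g_inf) 1 x
                   (minus (g_coef * ln x + g_inf * x) (g_coef * ln 1 + g_inf * 1))).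
  { apply (is_RInt_derive (fun u => g_coef * ln u + g_inf * u)).
    - intros u Hu. rewrite Rmin_left, Rmax_right in Hu by lra. auto_derive; [lra | field; lra].
    - intros u Hu. rewrite Rmin_left, Rmax_right in Hu by lra.
      apply (ex_derive_continuous (K := R_AbsRing) (V := R_NormedModule)). auto_derive. lra. }
  rewrite (is_RInt_unique _ _ _ _ Hftc). unfold minus, plus, opp; simpl. rewrite ln_1. ring.
Qed.

(* By [G_ge1], [G x / x = g_inf + (G 1 - g_inf) / x + g_coef (ln x / x)] for [x >= 1]. *)
Lemma is_lim_G_ratio_p_infty : is_lim (fun x => G k x / x) p_infty g_inf.
Proof.
  apply is_lim_ext_loc with (fun x => g_inf + (G k 1 - g_inf) * / x + g_coef * (ln x / x)).
  { exists 1. intros x Hx. rewrite (G_ge1 x) by lra. field. lra. }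
  replace (Finite g_inf) with (Finite (g_inf + (G k 1 - g_inf) * 0 + g_coef * 0)) by (f_equal; ring).
  apply is_lim_plus'; [apply is_lim_plus'; [apply is_lim_const |] |].
  - apply (is_lim_scal_l (fun x => / x) _ p_infty 0).
    apply (is_lim_inv (fun x => x) p_infty p_infty); [apply is_lim_id | discriminate].
  - apply (is_lim_scal_l (fun x => ln x / x) _ p_infty 0), is_lim_div_ln_p.
Qed.

Lemma g_elasticity_bounds t : 0 <= t ->
  -(3 / 2) <= t / g k t * Derive (g k) t <= 0.
Proof.
  intros Ht. destruct (Req_dec t 0) as [-> | Ht0].
  { unfold Rdiv. rewrite Rmult_0_l, Rmult_0_l. lra. }
  assert (Hgt : g k t = g_pos k t) by (unfold g; rewrite Rabs_pos_eq; lra).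
  rewrite Hgt. enough (-1 <= t / g_pos k t * Derive (g k) t <= 0) by lra.
  destruct (Rlt_dec t 1).
  - rewrite (Derive_g t _ ltac:(lra) (is_derive_g_pos_lt1 t ltac:(lra))), g_pos_lt1 by lra.
    assert (Hpos : 0 < 1 - k * t ^ 2) by nra.
    pose proof (sqrt_lt_R0 _ Hpos). pose proof (sqrt_sqrt _ (Rlt_le _ _ Hpos)) as Hsq.
    replace (t / sqrt (1 - k * t ^ 2) * (- (k * t) / sqrt (1 - k * t ^ 2)))
      with (- (k * t ^ 2) / (sqrt (1 - k * t ^ 2) * sqrt (1 - k * t ^ 2))) by (field; lra).
    rewrite Hsq.
    apply opp_div_between; nra.
  - rewrite (Derive_g t _ ltac:(lra) (is_derive_g_pos_ge1 t ltac:(lra))), g_pos_ge1 by lra.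
    pose proof g_coef_pos. pose proof g_inf_gt_third.
    replace (t / (g_coef / t + g_inf) * (- g_coef / t ^ 2))
      with (- g_coef / (g_coef + g_inf * t))
      by (assert (0 < g_coef + g_inf * t) by nra; field; split; [lra | nra]).
    apply opp_div_between; nra.
Qed.

End Profile.

Section Inverse.

Variable k : R.
Hypothesis k_pos : 0 < k.
Hypothesis k_lt : k < 1 / 3.
Variable Ginv : R -> R.
Hypothesis G_Ginv : forall t, G k (Ginv t) = t.
Hypothesis Ginv_G : forall x, Ginv (G k x) = x.

Lemma Ginv_0 : Ginv 0 = 0.
Proof. rewrite <- (G_0 k) at 1. apply Ginv_G. Qed.

Lemma Ginv_neq0 t : t <> 0 -> Ginv t <> 0.
Proof. intros Ht E. apply Ht. rewrite <- (G_Ginv t), E. apply G_0. Qed.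

Lemma inv_g_inf_lt_3 : / g_inf k < 3.
Proof.
  pose proof (g_inf_gt_third k k_pos k_lt).
  replace 3 with (/ (1 / 3)) by field. apply Rinv_lt_contravar; nra.
Qed.

Lemma Ginv_ratio_bounds t : t <> 0 -> 1 <= Ginv t / t <= / g_inf k.
Proof.
  intros Ht. pose proof (Ginv_neq0 t Ht) as Hx.
  pose proof (G_ratio_bounds k k_pos k_lt (Ginv t) Hx) as [Hlo Hhi].
  pose proof (g_ge_inf k k_pos k_lt (Ginv t)). pose proof (g_inf_gt_third k k_pos k_lt).
  rewrite G_Ginv in Hlo, Hhi. rewrite <- (Rinv_div t (Ginv t)). split.
  - rewrite <- Rinv_1 at 1. apply Rinv_le_contravar; lra.
  - apply Rinv_le_contravar; lra.
Qed.

Lemma Ginv_bounds t : 0 <= t -> t <= Ginv t <= 3 * t.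
Proof.
  intros Ht. destruct (Req_dec t 0) as [-> | Ht0]; [rewrite Ginv_0; lra |].
  pose proof (Ginv_ratio_bounds t Ht0). pose proof inv_g_inf_lt_3.
  replace (Ginv t) with (Ginv t / t * t) by (field; exact Ht0). nra.
Qed.

Lemma is_lim_Ginv_0 : is_lim Ginv 0 0.
Proof.
  assert (is_lim_3abs : is_lim (fun t => 3 * Rabs t) 0 0).
  { replace (Finite 0) with (Rbar_mult 3 (Rbar_abs 0)) at 2 by (simpl; f_equal; rewrite Rabs_R0; ring).
    apply is_lim_scal_l, is_lim_Rabs, is_lim_id. }
  apply (is_lim_le_le_loc (fun t => - (3 * Rabs t)) (fun t => 3 * Rabs t)).
  - exists (mkposreal 1 Rlt_0_1). intros t _ Ht. apply Rabs_le_between.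
    pose proof (Ginv_ratio_bounds t Ht). pose proof inv_g_inf_lt_3.
    replace (Ginv t) with (Ginv t / t * t) by (field; exact Ht).
    rewrite Rabs_mult, (Rabs_pos_eq (Ginv t / t)) by lra.
    pose proof (Rabs_pos t). nra.
  - replace (Finite 0) with (Rbar_opp 0) at 2 by (simpl; f_equal; ring).
    apply is_lim_opp. exact is_lim_3abs.
  - exact is_lim_3abs.
Qed.

Lemma is_lim_Ginv_p_infty : is_lim Ginv p_infty p_infty.
Proof.
  apply (is_lim_le_p_loc (fun t => t)); [| apply is_lim_id].
  exists 0. intros t Ht. apply Ginv_bounds; lra.
Qed.

End Inverse.

Theorem lemma4p1 (kappa : R) (Ginv : R -> R) :
  0 < kappa -> kappa < 1 / 3 ->
  (forall t, G kappa (Ginv t) = t) ->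
  (forall x, Ginv (G kappa x) = x) ->
  is_lim (fun t => Ginv t / t) 0 1 /\
  is_lim (fun t => Ginv t / t) p_infty (sqrt (1 - kappa) / (1 - 2 * kappa)) /\
  (forall t, 0 <= t -> t <= Ginv t <= 3 * t) /\
  (forall t, 0 <= t ->
     -(3 / 2) <= t / g kappa t * Derive (g kappa) t /\
     t / g kappa t * Derive (g kappa) t <= 0).
Proof.
  intros k_pos k_lt G_Ginv Ginv_G.
  pose proof (g_inf_gt_third kappa k_pos k_lt) as Hinf.
  split; [| split; [| split]].
  - rewrite <- Rinv_1. apply (is_lim_inverse_ratio (G kappa)).
    + exact G_Ginv.
    + lra.
    + exact (is_lim_G_ratio_0 kappa k_pos k_lt).
    + exact (is_lim_Ginv_0 kappa k_pos k_lt Ginv G_Ginv).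
    + exists (mkposreal 1 Rlt_0_1). intros t _ Ht E. injection E.
      apply (Ginv_neq0 kappa Ginv G_Ginv t Ht).
  - rewrite <- Rinv_div. apply (is_lim_inverse_ratio (G kappa)).
    + exact G_Ginv.
    + unfold g_inf in Hinf. lra.
    + exact (is_lim_G_ratio_p_infty kappa k_pos k_lt).
    + exact (is_lim_Ginv_p_infty kappa k_pos k_lt Ginv G_Ginv Ginv_G).
    + exists 0. intros t _. discriminate.
  - exact (Ginv_bounds kappa k_pos k_lt Ginv G_Ginv Ginv_G).
  - exact (g_elasticity_bounds kappa k_pos k_lt).
Qed.
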